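(* Let $M=(S,\mathrm{Act},P)$ be an MDP, $T\subseteq S$, $\mathrm{opt}\in\{\min,\max\}$, and let $r\in\mathbb{N}_\infty^S$ satisfy $\tilde D^{\mathrm{opt}}(r)\le r$ (pointwise). Then for all $s\in S$: if $r(s)<\infty$ then $\Pr^{\mathrm{opt}}_s(\Diamond T)<1$.
   Context: An MDP is a tuple $M=(S,\mathrm{Act},P)$ with $S$ finite, $\mathrm{Act}$ finite, $P\colon S\times\mathrm{Act}\times S\to[0,1]$ with $\sum_{s'}P(s,a,s')\in\{0,1\}$; $\mathrm{Act}(s)=\{a\mid\sum_{s'}P(s,a,s')=1\}$ is nonempty for all $s$; $\mathrm{Post}(s,a)=\{s'\mid P(s,a,s')>0\}$. A strategy is $\sigma\colon S\to\mathrm{Act}$ with $\sigma(s)\in\mathrm{Act}(s)$, inducing a Markov chain with transitions $P(s,\sigma(s),\cdot)$; $\Pr^\sigma_s(\Diamond T)$ is the probability of visiting $T$ from $s$ and $\Pr^{\mathrm{opt}}_s(\Diamond T)=\mathrm{opt}_\sigma\Pr^\sigma_s(\Diamond T)$. $\mathbb{N}_\infty=\mathbb{N}\cup\{\infty\}$ with $\infty+1=\infty$. The complementary distance operator $\tilde D^{\mathrm{opt}}\colon\mathbb{N}_\infty^S\to\mathbb{N}_\infty^S$ is $\tilde D^{\mathrm{opt}}(r)(s)=\infty$ if $s\in T$, and for $s\notin T$: $\tilde D^{\mathrm{opt}}(r)(s)=\mathrm{opt}_{a\in\mathrm{Act}(s)}\big(\min_{s'\in\mathrm{Post}(s,a)}r(s')+[\exists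 u,v\in\mathrm{Post}(s,a)\colon r(u)\neq r(v)]\big)$, where $[\varphi]\in\{0,1\}$ is the Iverson bracket. *)

From HB Require Import structures.
From mathcomp Require Import all_boot all_order all_algebra.
From mathcomp Require Import all_classical all_reals all_analysis.

Set Implicit Arguments.
Unset Strict Implicit.
Unset Printing Implicit Defensive.

Import Order.TTheory GRing.Theory Num.Theory.
Import numFieldNormedType.Exports.
Local Open Scope ring_scope.

(* [None] encodes oo, [Some n] encodes the natural number n. *)
Definition ninf := option nat.
Definition ninf_inf : ninf := None.

Definition ninf_le (x y : ninf) : bool :=
  match x, y with
  | _, None => true
  | None, Some _ => false
  | Some a, Some b => (a <= b)%N
  end.

Definition ninf_lt (x y : ninf) : bool := ninf_le x y && (x != y).

Definition ninf_min (x y : ninf) : ninf := if ninf_le x y then x else y.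
Definition ninf_max (x y : ninf) : ninf := if ninf_le x y then y else x.

Definition ninf_addn (x : ninf) (k : nat) : ninf :=
  match x with None => None | Some a => Some (a + k)%N end.

Section MDP.
Variables (R : realType) (S Act : finType).
Variable (P : S -> Act -> S -> R).

Definition is_MDP : Prop :=
  (forall s a s', 0 <= P s a s' <= 1) /\
  (forall s a, \sum_(s' : S) P s a s' = 0 \/ \sum_(s' : S) P s a s' = 1) /\
  (forall s, exists a, \sum_(s' : S) P s a s' = 1).

Definition enabled (s : S) (a : Act) : bool := \sum_(s' : S) P s a s' == 1.

Definition post (s : S) (a : Act) (s' : S) : bool := 0 < P s a s'.

Definition strategy (sigma : {ffun S -> Act}) : bool :=
  [forall s, enabled s (sigma s)].

Variable (T : {set S}).

Fixpoint reach_within (sigma : {ffun S -> Act}) (n : nat) (s : S) : R :=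
  if s \in T then 1 else
  match n with
  | 0 => 0
  | n'.+1 => \sum_(s' : S) P s (sigma s) s' * reach_within sigma n' s'
  end.

(* Pr^sigma_s(<> T): the probability of eventually visiting T, i.e. the limit
   of the (nondecreasing, bounded) step-bounded reachability probabilities. *)
Definition Pr_reach (sigma : {ffun S -> Act}) (s : S) : R :=
  limn (fun n => reach_within sigma n s).

Inductive optimum := Opt_min | Opt_max.

(* Pr^opt_s(<> T) = opt_sigma Pr^sigma_s(<> T), over the (finitely many)
   strategies.  The neutral elements 1 / 0 are harmless since all values lie in
   [0,1] and at least one strategy exists. *)
Definition Pr_opt (opt : optimum) (s : S) : R :=
  match opt with
  | Opt_min => \big[Num.min/1]_(sigma : {ffun S -> Act} | strategy sigma) Pr_reach sigma s
  | Opt_max => \big[Num.max/0]_(sigma : {ffun S -> Act} | strategy sigma) Pr_reach sigma s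
  end.

Definition Dtilde (opt : optimum) (r : S -> ninf) (s : S) : ninf :=
  if s \in T then ninf_inf else
  let val a :=
    ninf_addn (\big[ninf_min/ninf_inf]_(s' : S | post s a s') r s')
              (nat_of_bool [exists u, exists v,
                               [&& post s a u, post s a v & r u != r v]]) in
  match opt with
  | Opt_min => \big[ninf_min/ninf_inf]_(a : Act | enabled s a) val a
  | Opt_max => \big[ninf_max/Some 0%N]_(a : Act | enabled s a) val a
  end.

End MDP.

From HB Require Import structures.
From mathcomp Require Import all_boot all_order all_algebra.
From mathcomp Require Import all_classical all_reals all_analysis.
Import Order.TTheory GRing.Theory Num.Theory.
Import numFieldNormedType.Exports.
Local Open Scope ring_scope.

(** Call [r x] the rank of [x]. For [opt = min] take a strategy attaining the
  minimum in [D~(r)], for [opt = max] any strategy: by [D~(r) <= r], at a state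
  of finite rank [k] the chosen action then has a successor of rank [< k] or
  all its successors of rank exactly [k]. Argue by induction on [k]. If a state
  of rank [k] reached [T] almost surely, so would all its successors, none of
  which can then have rank [< k]. So the states of rank [k] reaching [T] almost
  surely form a set closed under successors and disjoint from [T], from which
  [T] is reached with probability [0]: a contradiction. *)

Section MinLikeBigop.
Context {A : Type} {op : A -> A -> A} (idx : A).

Lemma big_selective {I : finType} (P : pred I) (F : I -> A) :
  (forall x y, op x y = x \/ op x y = y) ->
  \big[op/idx]_(i | P i) F i = idx \/ exists2 i, P i & \big[op/idx]_(i | P i) F i = F i.
Proof.
move=> op_sel; elim/big_ind: _ => [|x y x_sel y_sel|i Pi]; first by left.
- by case: (op_sel x y) => ->.
- by right; exists i.
Qed.

Context {le : rel A}.
Hypothesis le_trans : transitive le.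
Hypotheses (op_le_l : forall x y, le (op x y) x) (op_le_r : forall x y, le (op x y) y).

Lemma big_le_cond {I : finType} (P : pred I) (F : I -> A) j :
  P j -> le (\big[op/idx]_(i | P i) F i) (F j).
Proof.
move=> Pj; have := mem_index_enum j; elim: (index_enum I) => [|i s IHs] //.
rewrite in_cons big_cons => /orP[/eqP <-|j_s]; first by rewrite Pj.
by case: (P i); [apply: le_trans (op_le_r _ _) (IHs j_s)|apply: IHs].
Qed.

End MinLikeBigop.

Lemma ninf_le_refl : reflexive ninf_le.
Proof. by case=> //= n; rewrite leqnn. Qed.

Lemma ninf_le_trans : transitive ninf_le.
Proof. by case=> [b|] [a|] [c|] //=; apply: leq_trans. Qed.

Lemma ninf_le_total x y : ninf_le x y || ninf_le y x.
Proof. by case: x y => [a|] [b|] //=; apply: leq_total. Qed.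

Lemma ninf_min_le_l x y : ninf_le (ninf_min x y) x.
Proof.
rewrite /ninf_min; case: ifPn => [_|]; first exact: ninf_le_refl.
by have := ninf_le_total x y => /orP[->|].
Qed.

Lemma ninf_min_le_r x y : ninf_le (ninf_min x y) y.
Proof. by rewrite /ninf_min; case: ifP => // _; apply: ninf_le_refl. Qed.

Lemma ninf_max_ge_l x y : ninf_le x (ninf_max x y).
Proof. by rewrite /ninf_max; case: ifP => // _; apply: ninf_le_refl. Qed.

Lemma ninf_max_ge_r x y : ninf_le y (ninf_max x y).
Proof.
rewrite /ninf_max; case: ifPn => [_|]; first exact: ninf_le_refl.
by have := ninf_le_total x y => /orP[->|].
Qed.

Lemma ninf_min_selective x y : ninf_min x y = x \/ ninf_min x y = y.
Proof. by rewrite /ninf_min; case: ifP; [left|right]. Qed.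

Lemma ninf_le_inf x : ninf_le x ninf_inf.
Proof. by case: x. Qed.

Section ReachabilityUnderStrategy.
Context {R : realType} {S Act : finType} {P : S -> Act -> S -> R}.
Context {T : {set S}} {sg : {ffun S -> Act}}.
Hypothesis P_ge0 : forall x a y, 0 <= P x a y.
Hypothesis sg_stochastic : forall x, \sum_y P x (sg x) y = 1.

Local Notation reach n x := (reach_within P T sg n x).
Local Notation Pr := (Pr_reach P T sg).

Lemma reach_within_bounds n x : 0 <= reach n x <= 1.
Proof.
elim: n x => [|n IHn] x /=; case: ifP => _; rewrite ?lexx ?ler01 //.
apply/andP; split.
  by apply: sumr_ge0 => y _; rewrite mulr_ge0 // (andP (IHn y)).1.
rewrite -(sg_stochastic x); apply: ler_sum => y _.
by rewrite ler_piMr // (andP (IHn y)).2.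
Qed.

Lemma reach_within_nondecreasing x : nondecreasing_seq (fun n => reach n x).
Proof.
apply: homo_leq => [||n]; [exact: lexx|exact: le_trans|].
elim: n x => [|n IHn] x /=; case: ifP => // _.
  by apply: sumr_ge0 => y _; rewrite mulr_ge0 // (andP (reach_within_bounds 0 y)).1.
by apply: ler_sum => y _; rewrite ler_wpM2l.
Qed.

Lemma reach_within_cvg x : cvgn (fun n => reach n x).
Proof.
apply: nondecreasing_is_cvgn; first exact: reach_within_nondecreasing.
by exists 1 => _ [n _ <-]; rewrite (andP (reach_within_bounds n x)).2.
Qed.

Lemma reach_within_le_Pr_reach n x : reach n x <= Pr x.
Proof.
exact: nondecreasing_cvgn_le (reach_within_nondecreasing x) (reach_within_cvg x) n.
Qed.

Lemma Pr_reach_ge0 x : 0 <= Pr x.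
Proof.
exact: le_trans (andP (reach_within_bounds 0 x)).1 (reach_within_le_Pr_reach 0 x).
Qed.

Lemma Pr_reach_le1 x : Pr x <= 1.
Proof.
apply: limr_le; first exact: reach_within_cvg.
by apply: nearW => n; rewrite (andP (reach_within_bounds n x)).2.
Qed.

Lemma Pr_reach_le_step x : x \notin T -> Pr x <= \sum_y P x (sg x) y * Pr y.
Proof.
move=> xNT; apply: limr_le; first exact: reach_within_cvg.
apply: nearW => -[|n] /=; rewrite (negbTE xNT).
  by apply: sumr_ge0 => y _; rewrite mulr_ge0 ?Pr_reach_ge0.
by apply: ler_sum => y _; rewrite ler_wpM2l ?reach_within_le_Pr_reach.
Qed.

(* [Pr x] is at most the [P x (sg x)]-average of the [Pr y <= 1]. *)
Lemma Pr_reach_succ_eq1 x y :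
  x \notin T -> Pr x = 1 -> 0 < P x (sg x) y -> Pr y = 1.
Proof.
move=> xNT Prx1 Pxy.
have defect_ge0 z : 0 <= P x (sg x) z * (1 - Pr z).
  by rewrite mulr_ge0 // subr_ge0 Pr_reach_le1.
have defect_sum0 : \sum_z P x (sg x) z * (1 - Pr z) = 0.
  apply/eqP; rewrite eq_le sumr_ge0 ?andbT //.
  under eq_bigr do rewrite mulrBr mulr1.
  by rewrite sumrB sg_stochastic subr_le0 -Prx1 Pr_reach_le_step.
have /eqP := psumr_eq0P (fun z _ => defect_ge0 z) defect_sum0 (i := y) isT.
by rewrite mulf_eq0 gt_eqF //= subr_eq0 => /eqP <-.
Qed.

Lemma Pr_reach_closed_eq0 (C : pred S) :
  (forall x, C x -> x \notin T) ->
  (forall x y, C x -> 0 < P x (sg x) y -> C y) ->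
  forall x, C x -> Pr x = 0.
Proof.
move=> C_notin C_closed.
have reach0 n x : C x -> reach n x = 0.
  elim: n x => [|n IHn] x Cx /=; rewrite (negbTE (C_notin x Cx)) //.
  apply: big1 => y _; have := P_ge0 x (sg x) y; rewrite le_eqVlt => /orP[/eqP <-|Pxy].
    by rewrite mul0r.
  by rewrite IHn ?mulr0 // (C_closed x).
move=> x Cx; rewrite /Pr_reach (_ : (fun n => reach n x) = fun=> 0) ?lim_cst //.
by apply: funext => n; apply: reach0.
Qed.

End ReachabilityUnderStrategy.

Definition act_value {R : realType} {S Act : finType} (P : S -> Act -> S -> R)
  (r : S -> ninf) (s : S) (a : Act) : ninf :=
  ninf_addn (\big[ninf_min/ninf_inf]_(s' : S | post P s a s') r s')
            (nat_of_bool [exists u, exists v,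
                             [&& post P s a u, post P s a v & r u != r v]]).

Lemma act_value_le_rank {R : realType} {S Act : finType} (P : S -> Act -> S -> R)
  (r : S -> ninf) s a k y :
  ninf_le (act_value P r s a) (Some k) -> 0 < P s a y ->
  r y = Some k \/ exists z j, [/\ 0 < P s a z, r z = Some j & (j < k)%N].
Proof.
rewrite /act_value => val_le Psy.
have m_le :=
  big_le_cond ninf_inf ninf_le_trans ninf_min_le_l ninf_min_le_r (post P s a) r y Psy.
have [m_inf|[z Psz m_z]] := big_selective ninf_inf (post P s a) r ninf_min_selective.
  by rewrite m_inf in val_le.
rewrite m_z in val_le m_le.
case: [exists u, _] / existsP val_le => [_|no_diff] /=.
  case rz: (r z) => [j|] //=; rewrite addn1 => ltjk.
  by right; exists z, j.
have -> : r y = r z.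
  apply/eqP/negPn/negP => ne_yz; apply: no_diff.
  by exists y; apply/existsP; exists z; apply/and3P.
case rz: (r z) => [j|] //=; rewrite addn0 leq_eqVlt => /orP[/eqP -> |ltjk].
  by left.
by right; exists z, j.
Qed.

Section RankingStrategy.
Context {R : realType} {S Act : finType} {P : S -> Act -> S -> R}.
Context {T : {set S}} {sg : {ffun S -> Act}} {r : S -> ninf}.
Hypothesis P_ge0 : forall x a y, 0 <= P x a y.
Hypothesis sg_stochastic : forall x, \sum_y P x (sg x) y = 1.
Hypothesis finite_rank_notin : forall x k, r x = Some k -> x \notin T.
Hypothesis sg_act_value_le : forall x, x \notin T -> ninf_le (act_value P r x (sg x)) (r x).

Lemma Pr_reach_lt1_of_finite_rank k x : r x = Some k -> Pr_reach P T sg x < 1.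
Proof.
elim/ltn_ind: k x => k IHk x rx.
rewrite lt_neqAle (Pr_reach_le1 P_ge0 sg_stochastic) andbT; apply/eqP => Prx1.
pose C y := (r y == Some k) && (Pr_reach P T sg y == 1).
have C_notin y : C y -> y \notin T by case/andP => /eqP /finite_rank_notin.
have C_closed y z : C y -> 0 < P y (sg y) z -> C z.
  case/andP => /eqP ry /eqP Pry1 Pyz; have yNT := finite_rank_notin y k ry.
  have succ1 w : 0 < P y (sg y) w -> Pr_reach P T sg w = 1.
    exact: Pr_reach_succ_eq1 P_ge0 sg_stochastic y w yNT Pry1.
  have := sg_act_value_le y yNT; rewrite ry.
  case/act_value_le_rank/(_ Pyz) => [rz|[w [j [Pyw rw ltjk]]]].
    by rewrite /C rz succ1 ?eqxx.
  by have := IHk j ltjk w rw; rewrite succ1 ?ltxx.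
have := Pr_reach_closed_eq0 P_ge0 C C_notin C_closed x.
by rewrite /C rx Prx1 !eqxx => /(_ isT)/eqP; rewrite oner_eq0.
Qed.

End RankingStrategy.

Section ComplementaryDistance.
Context {R : realType} {S Act : finType} (P : S -> Act -> S -> R).
Context (T : {set S}) (r : S -> ninf).

Lemma Dtilde_le_finite_notin opt x k :
  ninf_le (Dtilde P T opt r x) (r x) -> r x = Some k -> x \notin T.
Proof. by move=> Dr_le rx; apply/negP => xT; move: Dr_le; rewrite /Dtilde xT rx. Qed.

Lemma Dtilde_max_ge x a : x \notin T -> enabled P x a ->
  ninf_le (act_value P r x a) (Dtilde P T Opt_max r x).
Proof.
rewrite /Dtilde => /negbTE -> ena.
have ge_trans : transitive (fun u v => ninf_le v u).
  by move=> v u w uv vw; apply: ninf_le_trans vw uv.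
exact: (big_le_cond (Some 0%N) ge_trans ninf_max_ge_l ninf_max_ge_r _ _ a ena).
Qed.

Lemma Dtilde_min_attained x a0 : x \notin T -> enabled P x a0 ->
  exists2 a, enabled P x a & ninf_le (act_value P r x a) (Dtilde P T Opt_min r x).
Proof.
rewrite /Dtilde => /negbTE -> ena0.
have [->|[a ena ->]] := big_selective ninf_inf (enabled P x) (act_value P r x) ninf_min_selective.
  by exists a0; rewrite ?ninf_le_inf.
by exists a; rewrite ?ninf_le_refl.
Qed.

Lemma exists_strategy_Dtilde_min : (forall x, exists a, enabled P x a) ->
  exists2 sg, strategy P sg &
    forall x, x \notin T -> ninf_le (act_value P r x (sg x)) (Dtilde P T Opt_min r x).
Proof.
move=> enabled_ex.
have /fin_all_exists2[f f_enabled f_le] : forall x, exists2 a, enabled P x a &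
    x \notin T -> ninf_le (act_value P r x a) (Dtilde P T Opt_min r x).
  move=> x; have [a0 ena0] := enabled_ex x.
  have [xT|xNT] := boolP (x \in T); first by exists a0; rewrite ?xT.
  by have [a ena le_a] := Dtilde_min_attained x a0 xNT ena0; exists a.
by exists [ffun x => f x] => [|x]; [apply/forallP => x|]; rewrite ffunE; auto.
Qed.

End ComplementaryDistance.

Lemma strategy_stochastic {R : realType} {S Act : finType} {P : S -> Act -> S -> R} {sg} :
  strategy P sg -> forall x, \sum_y P x (sg x) y = 1.
Proof. by move=> /forallP sg_enabled x; apply/eqP/sg_enabled. Qed.

Theorem proposition2 (R : realType) (S Act : finType) (P : S -> Act -> S -> R)
  (HP : is_MDP P) (T : {set S}) (opt : optimum) (r : S -> ninf)
  (Hr : forall s, ninf_le (Dtilde P T opt r s) (r s)) :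
  forall s : S, ninf_lt (r s) ninf_inf -> Pr_opt P T opt s < 1.
Proof.
move=> s; case rs: (r s) => [k|] // _.
have [P_bounds [_ stochastic_ex]] := HP.
have P_ge0 x a y : 0 <= P x a y by case/andP: (P_bounds x a y).
have enabled_ex x : exists a, enabled P x a.
  by have [a /eqP] := stochastic_ex x; exists a.
have finite_rank_notin x j : r x = Some j -> x \notin T.
  exact: Dtilde_le_finite_notin (Hr x).
case: opt Hr => Hr /=.
- have [sg sg_strategy sg_le] := exists_strategy_Dtilde_min P T r enabled_ex.
  apply: le_lt_trans (bigmin_le_cond _ _ sg_strategy) _.
  apply: (Pr_reach_lt1_of_finite_rank P_ge0 (strategy_stochastic sg_strategy)
    finite_rank_notin _ _ _ rs) => x xNT.
  exact: ninf_le_trans (sg_le x xNT) (Hr x).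
- apply: bigmax_lt => // sg sg_strategy.
  apply: (Pr_reach_lt1_of_finite_rank P_ge0 (strategy_stochastic sg_strategy)
    finite_rank_notin _ _ _ rs) => x xNT.
  apply: ninf_le_trans (Hr x).
  exact: Dtilde_max_ge xNT (forallP sg_strategy x).
Qed.
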